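(* Let $N$ be a connected component of $\partial\Omega$, use Fermi coordinates $(x',x_{n+1})$ on $\Omega_N=\phi_N(N\times[0,r_{\max,N}))$, in which $p(x,\xi)=|\xi|_g^2=\xi_{n+1}^2+g(x,\xi')$ with $g(x,\cdot)$ a quadratic form in $\xi'$. Fix $\delta>0$ and let $f_\delta\in C^\infty([0,r_{\max,N}])$ satisfy $$\delta\le f_\delta(t)-\sup_{\{(x',\xi'):\,g(t,x',\xi')=1\}}\partial_t g(t,x',\xi')\le 2\delta .$$ Define $\psi_N(x_{n+1})=\int_0^{x_{n+1}}e^{\frac12\int_0^s f_\delta(\tau)d\tau}ds$ and $p_{\psi_N}(x,\xi)=p(x,\xi+i\partial_x\psi_N)$. Then there is $C(\delta)>0$ such that $$\{\operatorname{Re}p_{\psi_N},\operatorname{Im}p_{\psi_N}\}(x,\xi)\ge C(\delta)>0\quad\text{for all }(x,\xi)\in\operatorname{Char}(p_{\psi_N})=\{p_{\psi_N}=0\},\ x\in\Omega_N .$$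
   Context: $(\Omega,g)$ is a compact Riemannian manifold with boundary; $\phi_N(x,r)=\exp_x(-r\nu)$ with $\nu$ the unit exterior normal, and $r_{\max,N}$ is the supremum of $r_0$ for which $\phi_N$ is a diffeomorphism of $N\times[0,r_0)$ onto its image. $\{\cdot,\cdot\}$ is the Poisson bracket on $T^*\Omega_N$. Here $\sup_{\{g(t,x',\xi')=1\}}\partial_tg$ is taken over $x'\in N$ and $\xi'$ with $g(t,x',\xi')=1$. *)

From HB Require Import structures.
From mathcomp Require Import all_boot all_order all_algebra.
From mathcomp Require Import all_classical all_reals all_analysis.
From mathcomp Require Import complex.
Set Implicit Arguments. Unset Strict Implicit. Unset Printing Implicit Defensive.
Import Order.TTheory GRing.Theory Num.Theory.
Import numFieldNormedType.Exports.
Local Open Scope classical_set_scope.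
Local Open Scope ring_scope.

(* Fermi coordinates on Omega_N: a point is x : 'rV_(n.+1); the normal
   coordinate x_{n+1} is stored at index ord0, the tangential coordinates x'
   (coordinates on N) at indices lift ord0 j, j : 'I_n.  Same for xi. *)
Section Fermi.
Variables (R : realType) (n : nat).

Definition ecoord (j : 'I_n.+1) : 'rV[R]_n.+1 := delta_mx 0 j.
Definition nrm (x : 'rV[R]_n.+1) : R := x 0 ord0.
Definition tang (x : 'rV[R]_n.+1) : 'rV[R]_n := \row_j x 0 (lift ord0 j).

Definition gq (G : R -> 'rV[R]_n -> 'M[R]_n) (t : R) (x' xi' : 'rV[R]_n) : R :=
  \sum_(i < n) \sum_(j < n) G t x' i j * xi' 0 i * xi' 0 j.

Definition dtg (G : R -> 'rV[R]_n -> 'M[R]_n) (t : R) (x' xi' : 'rV[R]_n) : R :=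
  derive (fun s => gq G s x' xi') t 1.

Definition dtg_set (G : R -> 'rV[R]_n -> 'M[R]_n) (U : set 'rV[R]_n) (t : R) : set R :=
  [set y | exists x' xi', U x' /\ gq G t x' xi' = 1 /\ y = dtg G t x' xi'].

Definition oint (h : R -> R) (t : R) : R :=
  if 0 <= t then Rintegral lebesgue_measure `[0, t] h
  else - Rintegral lebesgue_measure `[t, 0] h.

Definition psiN (f : R -> R) (s : R) : R :=
  oint (fun u => expR (oint f u / 2)) s.

Definition gradpsi (f : R -> R) (x : 'rV[R]_n.+1) : 'rV[R]_n.+1 :=
  \row_j derive (fun y : 'rV[R]_n.+1 => psiN f (nrm y)) x (ecoord j).

(* holomorphic extension of p(x,xi) = xi_{n+1}^2 + g(x,xi') to complex xi *)
Definition pC (G : R -> 'rV[R]_n -> 'M[R]_n) (x : 'rV[R]_n.+1) (z : 'rV[R[i]]_n.+1) : R[i] :=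
  z 0 ord0 ^+ 2 +
  \sum_(i < n) \sum_(j < n)
     ((G (nrm x) (tang x) i j)%:C)%C * z 0 (lift ord0 i) * z 0 (lift ord0 j).

Definition ppsi (G : R -> 'rV[R]_n -> 'M[R]_n) (f : R -> R) (x xi : 'rV[R]_n.+1) : R[i] :=
  pC G x (\row_j (((xi 0 j)%:C)%C + 'i%C * ((gradpsi f x 0 j)%:C)%C)).

Definition poisson (a b : 'rV[R]_n.+1 -> 'rV[R]_n.+1 -> R)
  (x xi : 'rV[R]_n.+1) : R :=
  \sum_(j < n.+1)
    (derive (a x) xi (ecoord j) * derive (b ^~ xi) x (ecoord j)
     - derive (a ^~ xi) x (ecoord j) * derive (b x) xi (ecoord j)).

End Fermi.

From HB Require Import structures.
From mathcomp Require Import all_boot all_order all_algebra.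
From mathcomp Require Import all_classical all_reals all_analysis.
From mathcomp Require Import complex.
From mathcomp Require Import ring lra.
Set Implicit Arguments. Unset Strict Implicit. Unset Printing Implicit Defensive.
Import Order.TTheory GRing.Theory Num.Theory.
Import numFieldNormedType.Exports.
Local Open Scope classical_set_scope.
Local Open Scope ring_scope.

(* On Char(p_psi) we have p_psi = (xi_{n+1} + i psi')^2 + g(x, xi'), so xi_{n+1} = 0 and
   g(xi') = psi'^2.  Since psi'' = psi' f / 2, a direct computation in Fermi coordinates gives
   {Re p_psi, Im p_psi} = 2 psi' ((xi_{n+1}^2 + psi'^2) f - d_t g(xi')).  Writing
   xi' = psi' w with g(w) = 1, on Char this is 2 psi'^3 (f - d_t g(w)) >= 2 delta psi'^3,
   and psi' = exp(1/2 int f) is bounded below on [0, r] by compactness. *)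

Section OrientedIntegral.
Variable R : realType.
Local Notation mu := (@lebesgue_measure R).
Implicit Types (f : R -> R) (a b t : R).

Lemma continuous_integrable_itv f a b :
  continuous f -> mu.-integrable `[a, b] (EFin \o f).
Proof.
move=> cf; apply: continuous_compact_integrable; first exact: segment_compact.
exact: continuous_subspaceT.
Qed.

Lemma oint_Rintegral f a t : continuous f -> a <= 0 -> a <= t ->
  oint f t = Rintegral mu `[a, t] f - Rintegral mu `[a, 0] f.
Proof.
move=> cf a0 at_; rewrite /oint; case: ifPn => [t0|].
  rewrite (@Rintegral_itvB _ f (BLeft a) (BRight t) 0) ?bnd_simp//;
    last exact: continuous_integrable_itv.
  rewrite Rintegral_itv_obnd_cbnd//.
  apply: (@integrableS _ _ _ mu `[a, t]) => //;
    last exact: continuous_integrable_itv.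
  by apply: subset_itvr; rewrite bnd_simp.
rewrite -ltNge => t0.
rewrite -Rintegral_itv_obnd_cbnd; last first.
  apply: (@integrableS _ _ _ mu `[a, 0]) => //;
    last exact: continuous_integrable_itv.
  by apply: subset_itvr; rewrite bnd_simp.
have := @Rintegral_itvB _ f (BLeft a) (BRight 0) t
  (continuous_integrable_itv a 0 cf).
by rewrite !bnd_simp => /(_ at_ (ltW t0)) <-; rewrite opprB.
Qed.

Lemma is_derive_oint f t : continuous f -> is_derive t 1 (oint f) (f t).
Proof.
move=> cf; pose a := Num.min 0 t - 1.
have m0 : Num.min 0 t <= 0 by rewrite ge_min lexx.
have mt : Num.min 0 t <= t by rewrite ge_min lexx orbT.
have a0 : a <= 0 by rewrite /a; lra.
have at_ : a < t by rewrite /a; lra.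
have [dF F'] := @continuous_FTC1_closed R f a t (t + 1) (ltr_pwDr ltr01 (lexx t))
  (continuous_integrable_itv a (t + 1) cf) at_ (cf t).
set F := (fun x => _) in dF F'.
have dF1 : is_derive t 1 F (f t) by rewrite -F' derive1E; exact: derivableP.
have := is_deriveB dF1 (is_derive_cst (F 0) t 1).
rewrite subr0; apply: near_eq_is_derive.
near=> x; rewrite (oint_Rintegral cf a0)//.
by apply: ltW; near: x; exact: lt_nbhsr.
Unshelve. all: by end_near. Qed.
End OrientedIntegral.

Section PsiN.
Variables (R : realType) (f : R -> R).
Hypothesis cf : continuous f.
Implicit Types t : R.

Definition dpsiN t : R := expR (oint f t / 2).

Lemma dpsiN_gt0 t : 0 < dpsiN t.
Proof. exact: expR_gt0. Qed.

Lemma is_derive_dpsiN t : is_derive t 1 dpsiN (dpsiN t * (f t / 2)).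
Proof.
apply: (@is_derive1_comp _ expR (fun s => oint f s / 2)).
have -> : (fun s => oint f s / 2) = 2^-1 \*: oint f.
  by apply/funext => s /=; rewrite mulrC.
rewrite [f t / 2]mulrC; exact/is_deriveZ/is_derive_oint.
Qed.

Lemma continuous_dpsiN : continuous dpsiN.
Proof.
move=> t; have [+ _] := is_derive_dpsiN t.
by move/derivable1_diffP/differentiable_continuous.
Qed.

Lemma is_derive_psiN t : is_derive t 1 (psiN f) (dpsiN t).
Proof. exact/is_derive_oint/continuous_dpsiN. Qed.
End PsiN.

Lemma derive_line (R : numFieldType) (V W : normedModType R) (F : V -> W)
    (x v : V) (phi : R -> W) (d : W) :
  is_derive (0 : R) (1 : R) phi d -> (forall s, F (s *: v + x) = phi s) ->
  derive F x v = d.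
Proof.
move=> dphi Fphi; rewrite -(@derive_val _ _ _ _ _ _ _ dphi) /derive.
have -> : F x = phi 0 by rewrite -Fphi scale0r add0r.
suff -> : (fun h : R => h^-1 *: ((F \o shift x) (h *: v) - phi 0)) =
  (fun h : R => h^-1 *: ((phi \o shift 0) h%:A - phi 0)) by [].
by apply/funext => h /=; rewrite Fphi addr0 [_%:A]mulr1.
Qed.

Lemma is_derive0_shift (R : realType) (g : R -> R) (a d : R) :
  is_derive a (1 : R) g d -> is_derive (0 : R) (1 : R) (fun s => g (s + a)) d.
Proof.
move=> dg; rewrite -[d]mulr1.
by apply: (@is_derive1_comp _ g (shift a)); [rewrite /= add0r|exact: is_derive_shift].
Qed.

Section Fermi.
Variables (R : realType) (n : nat).
Implicit Types (x xi : 'rV[R]_n.+1) (y v : 'rV[R]_n) (s t c : R)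
  (G : R -> 'rV[R]_n -> 'M[R]_n).
Local Notation e := (@ecoord R n).

Lemma line_coordE x s j k : (s *: e j + x) 0 k = s * (j == k)%:R + x 0 k.
Proof. by rewrite /ecoord !mxE eqxx eq_sym. Qed.

Lemma nrm_line x s j : nrm (s *: e j + x) = s * (j == ord0)%:R + nrm x.
Proof. exact: line_coordE. Qed.

Lemma tang_line0 x s : tang (s *: e ord0 + x) = tang x.
Proof.
by apply/rowP => k; rewrite [LHS]mxE line_coordE [RHS]mxE eq_sym lift_eqF mulr0 add0r.
Qed.

Lemma gradpsiE (f : R -> R) x j : continuous f ->
  gradpsi f x 0 j = if j == ord0 then dpsiN f (nrm x) else 0.
Proof.
move=> cf; rewrite mxE.
apply: (@derive_line _ _ _ _ _ _ (fun s => psiN f (s * (j == ord0)%:R + nrm x)));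
  last by move=> s; rewrite nrm_line.
case: eqP => _ /=; last first.
  by under eq_fun do rewrite mulr0 add0r; exact: is_derive_cst.
under eq_fun do rewrite mulr1; exact/is_derive0_shift/is_derive_psiN.
Qed.

Lemma gqZ G t y v c : gq G t y (c *: v) = c ^+ 2 * gq G t y v.
Proof.
rewrite /gq mulr_sumr; apply: eq_bigr => i _.
by rewrite mulr_sumr; apply: eq_bigr => j _; rewrite !mxE; ring.
Qed.

Lemma gq_derivable G t y v :
  (forall i j, derivable (fun s => G s y i j) t 1) ->
  derivable (fun s => gq G s y v) t 1.
Proof.
move=> dG; have -> : (fun s => gq G s y v) =
    \sum_(i < n) \sum_(j < n) (fun s => G s y i j * (v 0 i * v 0 j)).
  by apply/funext => s; rewrite /gq !fct_sumE; apply: eq_bigr => i _;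
    rewrite fct_sumE; apply: eq_bigr => j _; rewrite mulrA.
apply: derivable_sum => i; apply: derivable_sum => j.
exact: (derivableM (dG i j) (derivable_cst _ _ _)).
Qed.

Lemma dtgZ G t y v c : derivable (fun s => gq G s y v) t 1 ->
  dtg G t y (c *: v) = c ^+ 2 * dtg G t y v.
Proof.
move=> dg; rewrite /dtg.
have -> : (fun s => gq G s y (c *: v)) = c ^+ 2 \*: (fun s => gq G s y v).
  by apply/funext => s; rewrite gqZ.
exact: deriveZ.
Qed.

Section PsiSymbol.
Variables (G : R -> 'rV[R]_n -> 'M[R]_n) (f : R -> R).
Hypothesis cf : continuous f.

Definition Re_ppsi x xi : R :=
  xi 0 ord0 ^+ 2 - dpsiN f (nrm x) ^+ 2 + gq G (nrm x) (tang x) (tang xi).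
Definition Im_ppsi x xi : R := 2 * xi 0 ord0 * dpsiN f (nrm x).

Local Open Scope complex_scope.

Lemma ppsiE x xi : ppsi G f x xi = (Re_ppsi x xi)%:C + 'i * (Im_ppsi x xi)%:C.
Proof.
rewrite /ppsi; set z := \row_j _.
have z0 : z 0 ord0 = (xi 0 ord0)%:C + 'i * (dpsiN f (nrm x))%:C.
  by rewrite mxE gradpsiE // eqxx.
have zlift i : z 0 (lift ord0 i) = (xi 0 (lift ord0 i))%:C.
  by rewrite mxE gradpsiE // lift_eqF mulr0 addr0.
rewrite /pC z0 /Re_ppsi /Im_ppsi /gq.
under eq_bigr => i _ do under eq_bigr => j _ do rewrite !zlift.
rewrite rmorphD rmorph_sum.
under [in RHS]eq_bigr => i _ do rewrite rmorph_sum.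
under [in RHS]eq_bigr => i _ do under eq_bigr => j _ do rewrite !rmorphM !mxE.
rewrite addrAC; congr (_ + _).
by apply/eqP; rewrite eq_complex /=; apply/andP; split; apply/eqP; ring.
Qed.

Lemma Re_ppsiE : (fun x xi => complex.Re (ppsi G f x xi)) = Re_ppsi.
Proof. by apply/funext => x; apply/funext => xi; rewrite ppsiE /=; ring. Qed.

Lemma Im_ppsiE : (fun x xi => complex.Im (ppsi G f x xi)) = Im_ppsi.
Proof. by apply/funext => x; apply/funext => xi; rewrite ppsiE /=; ring. Qed.

Lemma ppsi_eq0 x xi : ppsi G f x xi = 0 ->
  xi 0 ord0 = 0 /\ gq G (nrm x) (tang x) (tang xi) = dpsiN f (nrm x) ^+ 2.
Proof.
move=> p0; have [] : Re_ppsi x xi = 0 /\ Im_ppsi x xi = 0.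
  by rewrite -Re_ppsiE -Im_ppsiE /= p0.
rewrite /Re_ppsi /Im_ppsi => Re0 /eqP.
rewrite !mulf_eq0 (gt_eqF (dpsiN_gt0 _ _)) pnatr_eq0 orbF /= => /eqP xi0.
by split=> //; move: Re0; rewrite xi0; lra.
Qed.

Local Notation h x := (dpsiN f (nrm x)).

Lemma derive_Re_ppsi_xi0 x xi : derive (Re_ppsi x) xi (e ord0) = 2 * xi 0 ord0.
Proof.
pose c := - h x ^+ 2 + gq G (nrm x) (tang x) (tang xi).
apply: (@derive_line _ _ _ _ _ _ ((shift (xi 0 ord0)) ^+ 2 + cst c)) => [|s].
  by apply: is_derive_eq; rewrite /= add0r expr1 addr0 addr0 [_ *: 1]mulr1.
by rewrite /Re_ppsi line_coordE tang_line0 eqxx mulr1 /= addrA.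
Qed.

Lemma derive_Im_ppsi_xi0 x xi : derive (Im_ppsi x) xi (e ord0) = 2 * h x.
Proof.
apply: (@derive_line _ _ _ _ _ _ ((2 * h x) \*: shift (xi 0 ord0))) => [|s].
  by apply: is_derive_eq; rewrite addr0 [_ *: 1]mulr1.
by rewrite /Im_ppsi line_coordE eqxx mulr1 /= mulrAC.
Qed.

Lemma derive_Im_ppsi_x0 x xi :
  derive (Im_ppsi ^~ xi) x (e ord0) = 2 * xi 0 ord0 * (h x * (f (nrm x) / 2)).
Proof.
apply: (derive_line (is_deriveZ (2 * xi 0 ord0)
  (is_derive0_shift (is_derive_dpsiN cf (nrm x))))) => s.
by rewrite /Im_ppsi nrm_line eqxx mulr1.
Qed.

Lemma derive_Re_ppsi_x0 x xi :
  derivable (fun t => gq G t (tang x) (tang xi)) (nrm x) 1 ->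
  derive (Re_ppsi ^~ xi) x (e ord0) =
    - (2 * h x * (h x * (f (nrm x) / 2))) + dtg G (nrm x) (tang x) (tang xi).
Proof.
move=> /derivableP/is_derive0_shift dg.
have dh := is_derive0_shift (is_derive_dpsiN cf (nrm x)).
have dsq := is_deriveB (is_derive_cst (xi 0 ord0 ^+ 2) (0 : R) (1 : R)) (is_deriveX 2 dh).
apply: (derive_line (is_derive_eq (is_deriveD dsq dg) _)) => [|s].
  by rewrite /= !add0r expr1.
by rewrite /Re_ppsi nrm_line tang_line0 eqxx mulr1.
Qed.

Lemma derive_Im_ppsi_tang x xi i :
  derive (Im_ppsi ^~ xi) x (e (lift ord0 i)) = 0 /\
  derive (Im_ppsi x) xi (e (lift ord0 i)) = 0.
Proof.
split; apply: (derive_line (is_derive_cst (Im_ppsi x xi) (0 : R) (1 : R))) => s /=.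
- by rewrite /Im_ppsi nrm_line lift_eqF mulr0 add0r.
- by rewrite /Im_ppsi line_coordE lift_eqF mulr0 add0r.
Qed.

Local Notation bracket := (poisson (fun x xi => complex.Re (ppsi G f x xi))
                                   (fun x xi => complex.Im (ppsi G f x xi))).

Lemma poisson_ppsiE x xi :
  derivable (fun t => gq G t (tang x) (tang xi)) (nrm x) 1 ->
  bracket x xi = 2 * h x *
    ((xi 0 ord0 ^+ 2 + h x ^+ 2) * f (nrm x) - dtg G (nrm x) (tang x) (tang xi)).
Proof.
move=> dg; rewrite Re_ppsiE Im_ppsiE /poisson.
(* Each rewrite is confined to one factor: unifying a derivative of [Re_ppsi]
   with one of [Im_ppsi] unfolds both and is prohibitively slow. *)
rewrite big_ord_recl big1 => [|i _].
  rewrite addr0 [X in X * _ - _]derive_Re_ppsi_xi0.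
  rewrite [X in _ * X - _]derive_Im_ppsi_x0 [X in _ - _ * X]derive_Im_ppsi_xi0.
  by rewrite [X in _ - X * _](derive_Re_ppsi_x0 dg); field.
have [Dx Dxi] := derive_Im_ppsi_tang x xi i.
by rewrite [X in _ * X - _]Dx [X in _ - _ * X]Dxi !mulr0 subrr.
Qed.

Lemma poisson_ppsi_char x xi :
  derivable (fun t => gq G t (tang x) (tang xi)) (nrm x) 1 ->
  ppsi G f x xi = 0 ->
  exists2 w, gq G (nrm x) (tang x) w = 1 &
    bracket x xi = 2 * h x ^+ 3 * (f (nrm x) - dtg G (nrm x) (tang x) w).
Proof.
move=> dg /ppsi_eq0[xi0 gxi]; have hx0 := gt_eqF (dpsiN_gt0 f (nrm x)).
exists ((h x)^-1 *: tang xi).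
  by rewrite gqZ gxi exprVn mulVf // expf_eq0 hx0 andbF.
rewrite poisson_ppsiE // xi0 dtgZ // exprVn.
by field; rewrite hx0.
Qed.
End PsiSymbol.
End Fermi.

Theorem mainTheorem4 (R : realType) (n : nat) (U : set 'rV[R]_n) (r : R)
  (G : R -> 'rV[R]_n -> 'M[R]_n) (f : R -> R) (delta : R) :
  0 < r -> 0 < delta ->
  (* g is a Riemannian metric on the tangential directions *)
  (forall t x', 0 <= t < r -> U x' -> (G t x')^T = G t x') ->
  (forall t x' v, 0 <= t < r -> U x' -> v != 0 -> 0 < gq G t x' v) ->
  (* differentiability of the metric in the normal variable *)
  (forall t x' (i j : 'I_n), 0 <= t < r -> U x' ->
     derivable (fun s => G s x' i j) t 1) ->
  (* f_delta regular *)
  continuous f ->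
  (* the sup is finite, and the hypothesis on f_delta *)
  (forall t, 0 <= t < r -> has_ubound (dtg_set G U t)) ->
  (forall t, 0 <= t < r ->
     delta <= f t - sup (dtg_set G U t) <= 2 * delta) ->
  exists C : R, 0 < C /\
    forall x xi : 'rV[R]_n.+1, 0 <= nrm x < r -> U (tang x) ->
      ppsi G f x xi = 0 ->
      C <= poisson (fun y eta => complex.Re (ppsi G f y eta))
                   (fun y eta => complex.Im (ppsi G f y eta)) x xi.
Proof.
move=> r0 delta0 _ _ dG cf hub hf.
have [c _ hmin] : exists2 c, c \in `[0, r] &
    forall t, t \in `[0, r] -> dpsiN f c <= dpsiN f t.
  by apply: EVT_min; [exact: ltW | exact/continuous_subspaceT/continuous_dpsiN].
have hnn t : 0 <= dpsiN f t := ltW (dpsiN_gt0 f t).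
exists (2 * delta * dpsiN f c ^+ 3); split.
  by rewrite !mulr_gt0 ?exprn_gt0 ?dpsiN_gt0.
move=> x xi xr Ux Pz.
have dg := gq_derivable (v := tang xi) (fun i j => dG _ _ i j xr Ux).
have [w gw ->] := poisson_ppsi_char cf dg Pz.
have Dw : dtg G (nrm x) (tang x) w <= sup (dtg_set G U (nrm x)).
  apply: sup_upper_bound; last by exists (tang x), w.
  by split; [exists (dtg G (nrm x) (tang x) w), (tang x), w | exact: hub].
have /andP[fD _] := hf _ xr.
have hx : nrm x \in `[0, r] by case/andP: xr => x0 xr; rewrite in_itv /= x0 ltW.
have h3 := lerXn2r 3 (hnn c) (hnn (nrm x)) (hmin _ hx).
(* Stated over fresh variables so that [nra] never tries to unfold [dtg] or [dpsiN]. *)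
have key (a b F S D : R) : 0 <= a -> a <= b -> delta <= F - S -> D <= S ->
    2 * delta * a <= 2 * b * (F - D) by nra.
exact: key (exprn_ge0 3 (hnn c)) h3 fD Dw.
Qed.
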